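(* Let $\theta>0$ and consider the Hoppe tree with parameter $\theta$. For $n\ge2$ let $\mathcal G_{n-1}=\sigma(J_1,\dots,J_{n-2})$ (the $\sigma$-field generated by the Hoppe tree with $n-1$ vertices). (1) For $n\ge2$, $$\mathbb E[T_n\mid\mathcal G_{n-1}]=\tfrac{\theta+n-1}{\theta+n-2}T_{n-1}+1,\qquad \mathbb E[R_n\mid\mathcal G_{n-1}]=\tfrac{\theta+n}{\theta+n-2}R_{n-1}+\tfrac{1}{\theta+n-2}T_{n-1},$$ $$\mathbb E[U_n\mid\mathcal G_{n-1}]=\tfrac{\theta+n}{\theta+n-2}U_{n-1}+\tfrac{1}{\theta+n-2}T_{n-1}+1,\qquad \mathbb E[W_n\mid\mathcal G_{n-1}]=\tfrac{\theta+n}{\theta+n-2}W_{n-1}+\tfrac{\theta-1}{\theta+n-2}T_{n-1}+n-1.$$ (2) For $n\ge1$, $$\mathbb E T_n=(\theta+n-1)h_n^\theta=n\log n-\Psi(\theta+1)n+(\theta-1)\log n+O(1),$$ and for $n\ge2$, $$\mathbb E U_n=(\theta+n)(\theta+n-1)\Big[\tfrac{2}{1+\theta}-\tfrac{1}{\theta+n-1}-\tfrac{1}{\theta+n}\big(1+h_{n-1}^\theta\big)\Big]=\tfrac{2}{1+\theta}n^2-n\log n+O(n),$$ $$\mathbb E W_n=(\theta+n)(\theta+n-1)\Big[(\theta-1)\Big(\tfrac{1}{\theta+1}-\tfrac{1}{\theta+n-1}-\tfrac{h_{n-1}^\theta}{\theta+n}\Big)+h_n^\theta-1+\tfrac{\theta+1}{\theta+n}\Big]=n^2\log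 n-\Big[\Psi(\theta+1)+\tfrac{2}{\theta+1}\Big]n^2+\theta\,n\log n+O(n),$$ where the $O(\cdot)$ terms refer to $n\to\infty$ with $\theta$ fixed.
   Context: Let $(J_k)_{k\ge1}$ be independent with $\Pr(J_k=0)=\frac{\theta}{\theta+k-1}$ and $\Pr(J_k=i)=\frac{1}{\theta+k-1}$ for $i\in\{1,\dots,k-1\}$. The Hoppe tree with $n$ vertices has vertex set $\{0,\dots,n-1\}$, root $0$, and parent of $k\ge1$ equal to $J_k$. $D_k$ is the depth of vertex $k$, $D_{ij}$ the depth of the last common ancestor of $i$ and $j$ ($D_{kk}=D_k$). $T_n=\sum_{k=0}^{n-1}D_k$, $R_n=\sum_{0\le i<j\le n-1}D_{ij}$, $U_n=T_n+2R_n$, $W_n=\sum_{0\le i<j\le n-1}\operatorname{dist}(i,j)$ (Wiener index). $h_n^\theta=\sum_{j=1}^{n-1}\frac{1}{\theta+j}$ (so $h_1^\theta=0$), and $\Psi$ is the digamma function. *)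

From Stdlib Require Import Reals Lra Lia Arith List ClassicalEpsilon.
Open Scope R_scope.

Fixpoint rsum (n : nat) (f : nat -> R) : R :=
  match n with
  | O => 0
  | S m => rsum m f + f m
  end.

(* A configuration J : nat -> nat encodes the parent choices J_1, J_2, ...
   (only J_k for 1 <= k <= n-1 matter for the tree on n vertices). *)

(* Depth of vertex k, computed with fuel (fuel k suffices since J_k < k). *)
Fixpoint dep_f (fuel : nat) (J : nat -> nat) (k : nat) : nat :=
  match fuel with
  | O => O
  | S f => match k with
           | O => O
           | S _ => S (dep_f f J (J k))
           end
  end.

Definition depth (J : nat -> nat) (k : nat) : nat := dep_f k J k.

Fixpoint anc_f (fuel : nat) (J : nat -> nat) (a k : nat) : bool :=
  orb (Nat.eqb a k)
  match fuel with
  | O => false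
  | S f => match k with
           | O => false
           | S _ => anc_f f J a (J k)
           end
  end.

Definition is_anc (J : nat -> nat) (a k : nat) : bool := anc_f k J a k.

(* D_{ij}: depth of the last (deepest) common ancestor of i and j.
   Every ancestor of i has label <= i. *)
Definition lca_depth (J : nat -> nat) (i j : nat) : nat :=
  fold_right Nat.max O
    (map (depth J) (filter (fun a => andb (is_anc J a i) (is_anc J a j)) (seq 0 (S i)))).

(* Tree distance: length of the unique path i -> lca(i,j) -> j. *)
Definition tdist (J : nat -> nat) (i j : nat) : nat :=
  (depth J i - lca_depth J i j) + (depth J j - lca_depth J i j).

(* T_n, R_n, U_n, W_n for the tree with vertices 0..n-1. *)
Definition Tn (n : nat) (J : nat -> nat) : R :=
  rsum n (fun k => INR (depth J k)).
Definition Rn (n : nat) (J : nat -> nat) : R :=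
  rsum n (fun j => rsum j (fun i => INR (lca_depth J i j))).
Definition Un (n : nat) (J : nat -> nat) : R := Tn n J + 2 * Rn n J.
Definition Wn (n : nat) (J : nat -> nat) : R :=
  rsum n (fun j => rsum j (fun i => INR (tdist J i j))).

Definition pJ (theta : R) (k i : nat) : R :=
  if Nat.eqb i 0 then theta / (theta + INR k - 1) else 1 / (theta + INR k - 1).

Definition upd (J : nat -> nat) (k v : nat) : nat -> nat :=
  fun x => if Nat.eqb x k then v else J x.

(* Ex theta m F = E[F(J_1,...,J_m)] for independent J_k with law pJ theta k
   (J_k ranges over {0,...,k-1}). *)
Fixpoint Ex (theta : R) (m : nat) (F : (nat -> nat) -> R) : R :=
  match m with
  | O => F (fun _ => O)
  | S m' => Ex theta m' (fun J => rsum (S m') (fun i => pJ theta (S m') i * F (upd J (S m') i)))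
  end.

(* Conditional expectation E[F(J_1..J_{n-1}) | G_{n-1}], G_{n-1} = sigma(J_1..J_{n-2}),
   evaluated at the configuration J of (J_1,...,J_{n-2}). *)
Definition condE (theta : R) (n : nat) (F : (nat -> nat) -> R) (J : nat -> nat) : R :=
  rsum (n - 1) (fun i => pJ theta (n - 1) i * F (upd J (n - 1) i)).

(* Valid configuration of (J_1,...,J_m): J_k in {0,...,k-1}; every such value
   has positive probability, so this is the support of the law. *)
Definition valid (m : nat) (J : nat -> nat) : Prop :=
  forall k, (1 <= k <= m)%nat -> (J k < k)%nat.

Definition h (theta : R) (n : nat) : R :=
  rsum (n - 1) (fun j => 1 / (theta + INR (S j))).

(* Digamma function, via Gauss' limit formula
   Psi(x) = lim_{N->oo} ( ln N - sum_{k=0}^{N-1} 1/(x+k) ),  x > 0. *)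
Definition Psi (x : R) : R :=
  epsilon (inhabits 0)
    (fun l => Un_cv (fun N => ln (INR N) - rsum N (fun k => / (x + INR k))) l).

(* We first show that attaching
   the new vertex m+1 below p (the update  upd J (S m) p) leaves depths,
   ancestor relations and common-ancestor depths of the old vertices
   unchanged, so that
     T_{m+2} = T_{m+1} + 1 + D_p,      R_{m+2} = R_{m+1} + sum_{i<=m} D_{ip},
   while W_n = n T_n - U_n because dist(i,j) = D_i + D_j - 2 D_{ij}.
   Averaging over p with the law of J_{m+1} (the root has weight theta, each
   other vertex weight 1) and using sum_{i,p} D_{ip} = 2 R + T gives the
   recursions (1).  The expectation operator Ex is an iterated conditional
   expectation, so (1) yields the closed forms of E T_n, E U_n, E W_n by
   induction.  For the asymptotics, the Gauss sequence ln N - sum_{k<N} 1/(x+k)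
   has increments dominated by a telescoping sequence, hence converges to
   Psi x at rate O(1/N); thus h_n = ln n - Psi(theta+1) + O(1/n), from which
   the expansions of E T_n, E U_n and E W_n = n E T_n - E U_n follow. *)

From Stdlib Require Import Reals Lra Lia Arith List ClassicalEpsilon.
Open Scope R_scope.

Lemma valid_le m m' J : (m' <= m)%nat -> valid m J -> valid m' J.
Proof. intros H HV k Hk; apply HV; lia. Qed.

Lemma valid_upd m J p : valid m J -> (p <= m)%nat -> valid (S m) (upd J (S m) p).
Proof.
  intros HV Hp k Hk. unfold upd. destruct (Nat.eqb_spec k (S m)); [lia | apply HV; lia].
Qed.

Lemma upd_old m J p x : (x <= m)%nat -> upd J (S m) p x = J x.
Proof. intros Hx. unfold upd. destruct (Nat.eqb_spec x (S m)); [lia | reflexivity]. Qed.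

Lemma dep_f_agree J J' : forall f k, valid k J ->
  (forall x, (1 <= x <= k)%nat -> J x = J' x) -> dep_f f J k = dep_f f J' k.
Proof.
  induction f as [|f IH]; intros [|k] HV Hag; try reflexivity. simpl.
  assert (HJ : (J (S k) < S k)%nat) by (apply HV; lia).
  rewrite <- (Hag (S k)) by lia. f_equal. apply IH.
  - apply (valid_le (S k)); [lia | exact HV].
  - intros x Hx. apply Hag. lia.
Qed.

Lemma anc_f_agree J J' a : forall f k, valid k J ->
  (forall x, (1 <= x <= k)%nat -> J x = J' x) -> anc_f f J a k = anc_f f J' a k.
Proof.
  induction f as [|f IH]; intros [|k] HV Hag; try reflexivity. simpl.
  assert (HJ : (J (S k) < S k)%nat) by (apply HV; lia).
  rewrite <- (Hag (S k)) by lia. f_equal. apply IH.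
  - apply (valid_le (S k)); [lia | exact HV].
  - intros x Hx. apply Hag. lia.
Qed.

Lemma dep_f_fuel J : forall f g k, valid k J -> (k <= f)%nat -> (k <= g)%nat ->
  dep_f f J k = dep_f g J k.
Proof.
  induction f as [|f IH]; intros g k HV Hf Hg.
  - replace k with 0%nat by lia. destruct g; reflexivity.
  - destruct k as [|k]; [destruct g; reflexivity|].
    destruct g as [|g]; [lia|]. simpl.
    assert (HJ : (J (S k) < S k)%nat) by (apply HV; lia).
    f_equal. apply IH; [apply (valid_le (S k)); [lia | exact HV] | lia | lia].
Qed.

Lemma anc_f_fuel J a : forall f g k, valid k J -> (k <= f)%nat -> (k <= g)%nat ->
  anc_f f J a k = anc_f g J a k.
Proof.
  induction f as [|f IH]; intros g k HV Hf Hg.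
  - replace k with 0%nat by lia. destruct g; reflexivity.
  - destruct k as [|k]; [destruct g; reflexivity|].
    destruct g as [|g]; [lia|]. simpl.
    assert (HJ : (J (S k) < S k)%nat) by (apply HV; lia).
    f_equal. apply IH; [apply (valid_le (S k)); [lia | exact HV] | lia | lia].
Qed.

Lemma depth_S J k : valid k J -> (0 < k)%nat -> depth J k = S (depth J (J k)).
Proof.
  intros HV Hk. unfold depth. destruct k as [|k]; [lia|]. simpl. f_equal.
  assert (HJ : (J (S k) < S k)%nat) by (apply HV; lia).
  apply dep_f_fuel; [apply (valid_le (S k)); [lia | exact HV] | lia | lia].
Qed.

Lemma anc_0 J a : is_anc J a 0 = Nat.eqb a 0.
Proof. unfold is_anc; simpl. destruct (Nat.eqb a 0); reflexivity. Qed.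

Lemma anc_S J a k : valid k J -> (0 < k)%nat ->
  is_anc J a k = orb (Nat.eqb a k) (is_anc J a (J k)).
Proof.
  intros HV Hk. unfold is_anc. destruct k as [|k]; [lia|]. simpl. f_equal.
  assert (HJ : (J (S k) < S k)%nat) by (apply HV; lia).
  apply anc_f_fuel; [apply (valid_le (S k)); [lia | exact HV] | lia | lia].
Qed.

Lemma anc_refl J k : is_anc J k k = true.
Proof. unfold is_anc. destruct k; [reflexivity|]. simpl. rewrite Nat.eqb_refl. reflexivity. Qed.

Lemma anc_le J a : forall f k, valid k J -> anc_f f J a k = true -> (a <= k)%nat.
Proof.
  induction f as [|f IH]; intros k HV H; simpl in H.
  - apply Bool.orb_true_iff in H as [H|H]; [apply Nat.eqb_eq in H; lia | discriminate].
  - apply Bool.orb_true_iff in H as [H|H]; [apply Nat.eqb_eq in H; lia|].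
    destruct k as [|k]; [discriminate|].
    assert (HJ : (J (S k) < S k)%nat) by (apply HV; lia).
    assert (a <= J (S k))%nat; [|lia].
    apply (IH (J (S k))); [apply (valid_le (S k)); [lia | exact HV] | exact H].
Qed.

Lemma depth_mono J a k : valid k J -> is_anc J a k = true -> (depth J a <= depth J k)%nat.
Proof.
  revert a. induction k as [k IH] using lt_wf_ind. intros a HV H.
  destruct k as [|k].
  - rewrite anc_0 in H. apply Nat.eqb_eq in H. subst. lia.
  - rewrite anc_S in H by (auto; lia). apply Bool.orb_true_iff in H as [H|H].
    + apply Nat.eqb_eq in H. subst. lia.
    + assert (HJ : (J (S k) < S k)%nat) by (apply HV; lia).
      rewrite (depth_S J (S k)) by (auto; lia).
      assert (depth J a <= depth J (J (S k)))%nat; [|lia].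
      apply IH; auto. apply (valid_le (S k)); [lia | exact HV].
Qed.

Lemma depth_upd m J p k : valid m J -> (k <= m)%nat -> depth (upd J (S m) p) k = depth J k.
Proof.
  intros HV Hk. unfold depth. symmetry. apply dep_f_agree.
  - apply (valid_le m); auto.
  - intros x Hx. symmetry. apply upd_old. lia.
Qed.

Lemma anc_upd m J p a k : valid m J -> (k <= m)%nat -> is_anc (upd J (S m) p) a k = is_anc J a k.
Proof.
  intros HV Hk. unfold is_anc. symmetry. apply anc_f_agree.
  - apply (valid_le m); auto.
  - intros x Hx. symmetry. apply upd_old. lia.
Qed.

Lemma depth_new m J p : valid m J -> (p <= m)%nat ->
  depth (upd J (S m) p) (S m) = S (depth J p).
Proof.
  intros HV Hp. rewrite depth_S by (try apply valid_upd; auto; lia).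
  unfold upd at 2. rewrite Nat.eqb_refl. f_equal. apply depth_upd; auto.
Qed.

Lemma anc_new m J p a : valid m J -> (p <= m)%nat ->
  is_anc (upd J (S m) p) a (S m) = orb (Nat.eqb a (S m)) (is_anc J a p).
Proof.
  intros HV Hp. rewrite anc_S by (try apply valid_upd; auto; lia).
  unfold upd at 2. rewrite Nat.eqb_refl. f_equal. apply anc_upd; auto.
Qed.

Lemma le_list_max (l : list nat) x : In x l -> (x <= list_max l)%nat.
Proof.
  intros Hx. pose proof (proj1 (list_max_le l _) (le_n (list_max l))) as Hall.
  rewrite Forall_forall in Hall. auto.
Qed.

Lemma lca_le J i j : valid i J -> valid j J ->
  (lca_depth J i j <= depth J i)%nat /\ (lca_depth J i j <= depth J j)%nat.
Proof.
  intros Hi Hj. unfold lca_depth. change (fold_right Nat.max 0%nat ?l) with (list_max l).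
  split; apply list_max_le, Forall_forall; intros x Hx;
    apply in_map_iff in Hx as [a [<- Hin]];
    apply filter_In in Hin as [_ Hb]; apply andb_prop in Hb as [Hai Haj];
    apply depth_mono; auto.
Qed.

Lemma lca_diag J p : valid p J -> lca_depth J p p = depth J p.
Proof.
  intros HV. apply Nat.le_antisymm; [apply (lca_le J p p HV HV)|].
  unfold lca_depth. change (fold_right Nat.max 0%nat ?l) with (list_max l).
  apply le_list_max, in_map, filter_In. split.
  - apply in_seq; lia.
  - rewrite anc_refl; reflexivity.
Qed.

Lemma lca_root J i : lca_depth J i 0 = 0%nat.
Proof.
  apply Nat.le_0_r. unfold lca_depth. change (fold_right Nat.max 0%nat ?l) with (list_max l).
  apply list_max_le, Forall_forall. intros x Hx.
  apply in_map_iff in Hx as [a [<- Hin]].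
  apply filter_In in Hin as [_ Hb]; apply andb_prop in Hb as [_ Hb].
  rewrite anc_0 in Hb. apply Nat.eqb_eq in Hb. subst. reflexivity.
Qed.

(* Symmetry: candidate ancestors beyond min(i,j) never qualify. *)
Lemma lca_sym_le J i j : valid j J -> (i <= j)%nat -> lca_depth J j i = lca_depth J i j.
Proof.
  intros HV Hij. unfold lca_depth.
  replace (S j) with (S i + (j - i))%nat by lia. rewrite seq_app, filter_app.
  assert (Hnil : filter (fun a => (is_anc J a (S i + (j - i) - 1) && is_anc J a i)%bool)
                        (seq (0 + S i) (j - i)) = nil).
  { rewrite <- (filter_false (seq (0 + S i) (j - i))). apply filter_ext_in.
    intros a Ha. apply in_seq in Ha. destruct (is_anc J a i) eqn:E.
    - apply anc_le in E; [lia|]. apply (valid_le j); auto; lia.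
    - apply Bool.andb_false_r. }
  replace (S i + (j - i) - 1)%nat with j in Hnil by lia.
  rewrite Hnil, app_nil_r. do 2 f_equal. apply filter_ext. intros; apply Bool.andb_comm.
Qed.

Lemma lca_sym J i j : valid i J -> valid j J -> lca_depth J j i = lca_depth J i j.
Proof.
  intros Hi Hj. destruct (Nat.le_ge_cases i j).
  - apply lca_sym_le; auto.
  - symmetry. apply lca_sym_le; auto.
Qed.

Lemma lca_upd m J p i j : valid m J -> (i <= m)%nat -> (j <= m)%nat ->
  lca_depth (upd J (S m) p) i j = lca_depth J i j.
Proof.
  intros HV Hi Hj. unfold lca_depth.
  rewrite (filter_ext_in _ (fun a => (is_anc J a i && is_anc J a j)%bool)).
  - f_equal. apply map_ext_in. intros a Ha. apply filter_In in Ha as [Ha _].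
    apply in_seq in Ha. apply depth_upd; auto; lia.
  - intros a Ha. rewrite !anc_upd; auto.
Qed.

Lemma lca_new m J p i : valid m J -> (p <= m)%nat -> (i <= m)%nat ->
  lca_depth (upd J (S m) p) i (S m) = lca_depth J i p.
Proof.
  intros HV Hp Hi. unfold lca_depth.
  rewrite (filter_ext_in _ (fun a => (is_anc J a i && is_anc J a p)%bool)).
  - f_equal. apply map_ext_in. intros a Ha. apply filter_In in Ha as [Ha _].
    apply in_seq in Ha. apply depth_upd; auto; lia.
  - intros a Ha. apply in_seq in Ha. rewrite anc_new, anc_upd; auto.
    destruct (Nat.eqb_spec a (S m)); [lia | reflexivity].
Qed.

Lemma rsum_ext n f g : (forall i, (i < n)%nat -> f i = g i) -> rsum n f = rsum n g.
Proof. induction n; intros H; simpl; [reflexivity|]. rewrite IHn, H; auto. Qed.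

Lemma rsum_plus n f g : rsum n (fun i => f i + g i) = rsum n f + rsum n g.
Proof. induction n; simpl; [lra|]. rewrite IHn; lra. Qed.

Lemma rsum_scal n c f : rsum n (fun i => c * f i) = c * rsum n f.
Proof. induction n; simpl; [lra|]. rewrite IHn; lra. Qed.

Lemma rsum_const n c : rsum n (fun _ => c) = INR n * c.
Proof. induction n; simpl rsum; [simpl; lra|]. rewrite IHn, S_INR; lra. Qed.

Lemma rsum_shift n f : rsum (S n) f = f 0%nat + rsum n (fun i => f (S i)).
Proof. induction n; simpl in *; [lra|]. rewrite IHn; lra. Qed.

Lemma rsum_square_sym N (f : nat -> nat -> R) :
  (forall i j, (i < N)%nat -> (j < N)%nat -> f i j = f j i) ->
  rsum N (fun p => rsum N (fun i => f i p))
  = 2 * rsum N (fun j => rsum j (fun i => f i j)) + rsum N (fun k => f k k).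
Proof.
  induction N; intros Hs; simpl; [lra|].
  rewrite (rsum_plus N (fun p => rsum N (fun i => f i p)) (fun p => f N p)).
  rewrite IHN by (intros; apply Hs; lia).
  rewrite (rsum_ext N (fun p => f N p) (fun p => f p N)) by (intros; apply Hs; lia).
  lra.
Qed.

(* Averaging g over the law of J_{m+1}: the root has weight theta, the other
   m vertices weight 1, out of a total theta + m. *)
Lemma pJ_sum theta m g : 0 < theta ->
  rsum (S m) (fun p => pJ theta (S m) p * g p)
  = ((theta - 1) * g 0%nat + rsum (S m) g) / (theta + INR m).
Proof.
  intros Ht. assert (0 <= INR m) by apply pos_INR.
  rewrite !rsum_shift. unfold pJ. simpl Nat.eqb.
  rewrite (rsum_ext m _ (fun i => / (theta + INR m) * g (S i))).
  - rewrite rsum_scal, S_INR. field. lra.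
  - intros i _. simpl Nat.eqb. rewrite S_INR. field. lra.
Qed.

Lemma pJ_total theta m : 0 < theta -> rsum (S m) (fun p => pJ theta (S m) p) = 1.
Proof.
  intros Ht. rewrite (rsum_ext _ _ (fun p => pJ theta (S m) p * 1)) by (intros; lra).
  rewrite pJ_sum, rsum_const, S_INR by auto. assert (0 <= INR m) by apply pos_INR.
  field. lra.
Qed.

Lemma condE_attach theta m F J : 0 < theta ->
  condE theta (S (S m)) F J
  = ((theta - 1) * F (upd J (S m) 0%nat) + rsum (S m) (fun p => F (upd J (S m) p)))
    / (theta + INR m).
Proof. intros Ht. exact (pJ_sum theta m (fun p => F (upd J (S m) p)) Ht). Qed.

Lemma condE_ext theta n F G J :
  (forall i, (i < n - 1)%nat -> F (upd J (n - 1) i) = G (upd J (n - 1) i)) ->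
  condE theta n F J = condE theta n G J.
Proof. intros H. unfold condE. apply rsum_ext. intros i Hi. rewrite H; auto. Qed.

Lemma condE_lin theta n F G a b J :
  condE theta n (fun J => a * F J + b * G J) J = a * condE theta n F J + b * condE theta n G J.
Proof.
  unfold condE. rewrite <- !rsum_scal, <- rsum_plus. apply rsum_ext. intros; ring.
Qed.

Lemma Tn_new m J p : valid m J -> (p <= m)%nat ->
  Tn (S (S m)) (upd J (S m) p) = Tn (S m) J + 1 + INR (depth J p).
Proof.
  intros HV Hp. unfold Tn. change (rsum (S (S m)) ?f) with (rsum (S m) f + f (S m)); cbv beta.
  rewrite depth_new, S_INR by auto.
  rewrite (rsum_ext (S m) _ (fun k => INR (depth J k))) by (intros; rewrite depth_upd; auto; lia).
  lra.
Qed.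

Lemma Rn_new m J p : valid m J -> (p <= m)%nat ->
  Rn (S (S m)) (upd J (S m) p) = Rn (S m) J + rsum (S m) (fun i => INR (lca_depth J i p)).
Proof.
  intros HV Hp. unfold Rn. change (rsum (S (S m)) ?f) with (rsum (S m) f + f (S m)); cbv beta.
  f_equal.
  - apply rsum_ext. intros j Hj. apply rsum_ext. intros i Hi. rewrite lca_upd; auto; lia.
  - apply rsum_ext. intros i Hi. rewrite lca_new; auto; lia.
Qed.

(* W_n = n T_n - U_n, from dist(i,j) = D_i + D_j - 2 D_{ij}. *)
Lemma Wn_decomp N J n : valid N J -> (n <= S N)%nat -> Wn n J = INR n * Tn n J - Un n J.
Proof.
  intros HV. unfold Un. induction n; intros Hn.
  - unfold Wn, Tn, Rn. simpl. lra.
  - unfold Wn, Tn, Rn in *. simpl rsum. rewrite IHn by lia.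
    rewrite (rsum_ext n (fun i => INR (tdist J i n))
               (fun i => (INR (depth J i) + INR (depth J n)) + (-2) * INR (lca_depth J i n))).
    2:{ intros i Hi. destruct (lca_le J i n) as [H1 H2]; try (apply (valid_le N); auto; lia).
        unfold tdist. rewrite plus_INR, !minus_INR by auto. lra. }
    rewrite rsum_plus, rsum_plus, rsum_scal, rsum_const, S_INR. lra.
Qed.

Lemma condE_T theta n J : 0 < theta -> (2 <= n)%nat -> valid (n - 2) J ->
  condE theta n (Tn n) J = (theta + INR n - 1) / (theta + INR n - 2) * Tn (n - 1) J + 1.
Proof.
  intros Ht Hn HV. destruct n as [|[|m]]; try lia.
  replace (S (S m) - 2)%nat with m in HV by lia. replace (S (S m) - 1)%nat with (S m) by lia.
  rewrite condE_attach, Tn_new by (auto; lia).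
  rewrite (rsum_ext (S m) (fun p => Tn (S (S m)) (upd J (S m) p))
             (fun p => Tn (S m) J + 1 + INR (depth J p)))
    by (intros; apply Tn_new; auto; lia).
  rewrite !rsum_plus, !rsum_const.
  change (rsum (S m) (fun p => INR (depth J p))) with (Tn (S m) J).
  assert (0 <= INR m) by apply pos_INR. rewrite !S_INR. simpl (depth J 0). simpl INR.
  field. lra.
Qed.

Lemma condE_R theta n J : 0 < theta -> (2 <= n)%nat -> valid (n - 2) J ->
  condE theta n (Rn n) J
  = (theta + INR n) / (theta + INR n - 2) * Rn (n - 1) J + 1 / (theta + INR n - 2) * Tn (n - 1) J.
Proof.
  intros Ht Hn HV. destruct n as [|[|m]]; try lia.
  replace (S (S m) - 2)%nat with m in HV by lia. replace (S (S m) - 1)%nat with (S m) by lia.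
  assert (HVi : forall i, (i < S m)%nat -> valid i J) by (intros; apply (valid_le m); auto; lia).
  rewrite condE_attach, Rn_new by (auto; lia).
  rewrite (rsum_ext (S m) (fun p => Rn (S (S m)) (upd J (S m) p))
             (fun p => Rn (S m) J + rsum (S m) (fun i => INR (lca_depth J i p))))
    by (intros; apply Rn_new; auto; lia).
  rewrite rsum_plus, rsum_const.
  rewrite (rsum_ext (S m) (fun i => INR (lca_depth J i 0)) (fun _ => 0))
    by (intros; rewrite lca_root; reflexivity).
  rewrite rsum_square_sym by (intros; rewrite lca_sym; auto).
  rewrite (rsum_ext (S m) (fun k => INR (lca_depth J k k)) (fun k => INR (depth J k)))
    by (intros; rewrite lca_diag; auto).
  change (rsum (S m) (fun k => INR (depth J k))) with (Tn (S m) J).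
  change (rsum (S m) (fun j => rsum j (fun i => INR (lca_depth J i j)))) with (Rn (S m) J).
  rewrite rsum_const. assert (0 <= INR m) by apply pos_INR. rewrite !S_INR. field. lra.
Qed.

Lemma condE_U theta n J : 0 < theta -> (2 <= n)%nat -> valid (n - 2) J ->
  condE theta n (Un n) J
  = (theta + INR n) / (theta + INR n - 2) * Un (n - 1) J
    + 1 / (theta + INR n - 2) * Tn (n - 1) J + 1.
Proof.
  intros Ht Hn HV.
  rewrite (condE_ext theta n _ (fun J => 1 * Tn n J + 2 * Rn n J)) by (intros; unfold Un; ring).
  rewrite condE_lin, condE_T, condE_R by auto. unfold Un.
  assert (2 <= INR n) by (apply (le_INR 2); auto). field. lra.
Qed.

Lemma condE_W theta n J : 0 < theta -> (2 <= n)%nat -> valid (n - 2) J ->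
  condE theta n (Wn n) J
  = (theta + INR n) / (theta + INR n - 2) * Wn (n - 1) J
    + (theta - 1) / (theta + INR n - 2) * Tn (n - 1) J + (INR n - 1).
Proof.
  intros Ht Hn HV.
  rewrite (condE_ext theta n _ (fun J => INR n * Tn n J + (-1) * Un n J)).
  2:{ intros i Hi. rewrite (Wn_decomp (n - 1)); [ring | | lia].
      destruct n as [|[|m]]; try lia. replace (S (S m) - 1)%nat with (S m) by lia.
      apply valid_upd; [apply (valid_le (S (S m) - 2)); [lia | exact HV] | lia]. }
  rewrite condE_lin, condE_T, condE_U by auto.
  rewrite (Wn_decomp (n - 2) J (n - 1)) by (auto; lia).
  rewrite minus_INR by lia. simpl (INR 1).
  assert (2 <= INR n) by (apply (le_INR 2); auto). field. lra.
Qed.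

Lemma Ex_ext theta m : forall F G, (forall J, valid m J -> F J = G J) -> Ex theta m F = Ex theta m G.
Proof.
  induction m; intros F G H; cbn [Ex].
  - apply H. intros k Hk; lia.
  - apply IHm. intros J HV. apply rsum_ext. intros i Hi. rewrite H; auto.
    apply valid_upd; auto; lia.
Qed.

Lemma Ex_lin theta m : 0 < theta -> forall F G a b c,
  Ex theta m (fun J => a * F J + b * G J + c) = a * Ex theta m F + b * Ex theta m G + c.
Proof.
  intros Ht. induction m; intros F G a b c; cbn [Ex]; [reflexivity|].
  rewrite <- IHm. apply Ex_ext. intros J _.
  rewrite (rsum_ext _ _ (fun i => a * (pJ theta (S m) i * F (upd J (S m) i)) +
     b * (pJ theta (S m) i * G (upd J (S m) i)) + c * pJ theta (S m) i)) by (intros; lra).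
  rewrite !rsum_plus, !rsum_scal, pJ_total by auto. lra.
Qed.

(* The hypothesis form needed by the recursions of part (1) at n = m + 2. *)
Lemma valid_shift m J : valid m J -> valid (S (S m) - 2) J.
Proof. apply valid_le; lia. Qed.

(* Tower property: an affine conditional recursion passes to expectations. *)
Lemma Ex_recursion theta m F G H a b c : 0 < theta ->
  (forall J, valid m J -> condE theta (S (S m)) F J = a * G J + b * H J + c) ->
  Ex theta (S m) F = a * Ex theta m G + b * Ex theta m H + c.
Proof.
  intros Ht Hrec. change (Ex theta (S m) F) with (Ex theta m (condE theta (S (S m)) F)).
  rewrite (Ex_ext theta m _ _ Hrec). apply Ex_lin; auto.
Qed.

Lemma h_S theta k : (1 <= k)%nat -> h theta (S k) = h theta k + 1 / (theta + INR k).
Proof.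
  intros Hk. destruct k as [|k]; [lia|]. unfold h.
  replace (S (S k) - 1)%nat with (S k) by lia. replace (S k - 1)%nat with k by lia.
  reflexivity.
Qed.

Lemma expected_T theta m : 0 < theta -> Ex theta m (Tn (S m)) = (theta + INR m) * h theta (S m).
Proof.
  intros Ht. induction m.
  - unfold Tn, h. simpl. lra.
  - rewrite (Ex_recursion theta m _ (Tn (S m)) (Tn (S m))
               ((theta + INR (S (S m)) - 1) / (theta + INR (S (S m)) - 2)) 0 1) by
      (auto; intros J HV; rewrite condE_T by (try lia; auto using valid_shift);
       replace (S (S m) - 1)%nat with (S m) by lia; ring).
    rewrite IHm, (h_S theta (S m)), !S_INR by lia.
    assert (0 <= INR m) by apply pos_INR. field. lra.
Qed.

Lemma expected_U theta m : 0 < theta ->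
  Ex theta (S m) (Un (S (S m)))
  = (theta + INR (S (S m))) * (theta + INR (S (S m)) - 1) *
    (2 / (1 + theta) - 1 / (theta + INR (S (S m)) - 1)
     - 1 / (theta + INR (S (S m))) * (1 + h theta (S m))).
Proof.
  intros Ht.
  assert (Hstep : forall k, Ex theta (S k) (Un (S (S k)))
            = (theta + INR (S (S k))) / (theta + INR (S (S k)) - 2) * Ex theta k (Un (S k))
              + 1 / (theta + INR (S (S k)) - 2) * Ex theta k (Tn (S k)) + 1).
  { intros k. apply Ex_recursion; auto. intros J HV.
    rewrite condE_U by (try lia; auto using valid_shift).
    replace (S (S k) - 1)%nat with (S k) by lia. reflexivity. }
  induction m.
  - rewrite Hstep. unfold Un, Tn, Rn, h. simpl. field; repeat split; lra.
  - rewrite Hstep, IHm, expected_T, (h_S theta (S m)) by (auto; lia).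
    assert (0 <= INR m) by apply pos_INR. rewrite !S_INR. field. lra.
Qed.

Lemma expected_W_decomp theta m : 0 < theta ->
  Ex theta m (Wn (S m)) = INR (S m) * Ex theta m (Tn (S m)) - Ex theta m (Un (S m)).
Proof.
  intros Ht.
  rewrite (Ex_ext _ _ _ (fun J => INR (S m) * Tn (S m) J + (-1) * Un (S m) J + 0)).
  - rewrite Ex_lin by auto. ring.
  - intros J HV. rewrite (Wn_decomp m) by auto. ring.
Qed.

Lemma expected_W theta m : 0 < theta ->
  Ex theta (S m) (Wn (S (S m)))
  = (theta + INR (S (S m))) * (theta + INR (S (S m)) - 1) *
    ((theta - 1) * (1 / (theta + 1) - 1 / (theta + INR (S (S m)) - 1)
                    - h theta (S m) / (theta + INR (S (S m))))
     + h theta (S (S m)) - 1 + (theta + 1) / (theta + INR (S (S m)))).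
Proof.
  intros Ht. rewrite expected_W_decomp, expected_U, expected_T, (h_S theta (S m)) by (auto; lia).
  assert (0 <= INR m) by apply pos_INR. rewrite !S_INR. field. lra.
Qed.

(* From 1 + x <= exp x: the increments of ln lie between 1/(u+1) and 1/u. *)
Lemma ln_succ_bounds u : 0 < u -> 1 / (u + 1) <= ln (u + 1) - ln u <= 1 / u.
Proof.
  intros Hu.
  pose proof (exp_ineq1_le (ln u - ln (u + 1))) as H1.
  pose proof (exp_ineq1_le (ln (u + 1) - ln u)) as H2.
  unfold Rminus in H1, H2. rewrite exp_plus, exp_Ropp, !exp_ln in H1, H2 by lra.
  replace (u * / (u + 1)) with (1 - 1 / (u + 1)) in H1 by (field; lra).
  replace ((u + 1) * / u) with (1 + 1 / u) in H2 by (field; lra).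
  lra.
Qed.

(* Crude bound |ln N| <= N for N >= 1, enough for O(n) error terms. *)
Lemma ln_abs_le N : 1 <= N -> Rabs (ln N) <= N.
Proof.
  intros HN.
  pose proof (exp_ineq1_le (ln N)) as H1. pose proof (exp_ineq1_le (- ln N)) as H2.
  rewrite exp_ln in H1 by lra. rewrite exp_Ropp, exp_ln in H2 by lra.
  assert (/ N <= 1) by (rewrite <- Rinv_1; apply Rinv_le_contravar; lra).
  apply Rabs_le; lra.
Qed.

Lemma telescoping_tail (u : nat -> R) c : 0 <= c ->
  (forall N, (1 <= N)%nat -> Rabs (u (S N) - u N) <= c * (1 / INR N - 1 / INR (S N))) ->
  forall N M, (1 <= N)%nat -> (N <= M)%nat -> Rabs (u M - u N) <= c / INR N.
Proof.
  intros Hc Hstep N M HN HM.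
  assert (Htel : forall k, Rabs (u (N + k)%nat - u N) <= c * (1 / INR N - 1 / INR (N + k))).
  { induction k.
    - rewrite Nat.add_0_r, Rminus_diag, Rabs_R0. lra.
    - rewrite Nat.add_succ_r.
      pose proof (Hstep (N + k)%nat ltac:(lia)).
      pose proof (Rabs_triang (u (S (N + k)) - u (N + k)%nat) (u (N + k)%nat - u N)).
      replace (u (S (N + k)) - u (N + k)%nat + (u (N + k)%nat - u N))
        with (u (S (N + k)) - u N) in * by ring.
      lra. }
  replace M with (N + (M - N))%nat by lia.
  pose proof (Htel (M - N)%nat).
  assert (0 < INR (N + (M - N))) by (apply lt_0_INR; lia).
  assert (0 < 1 / INR (N + (M - N))) by (apply Rdiv_lt_0_compat; lra).
  unfold Rdiv in *. nra.
Qed.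

Lemma cauchy_of_tail (u : nat -> R) c : 0 <= c ->
  (forall N M, (1 <= N)%nat -> (N <= M)%nat -> Rabs (u M - u N) <= c / INR N) ->
  Cauchy_crit u.
Proof.
  intros Hc Htail eps He.
  destruct (INR_unbounded (2 * c / eps)) as [N0 HN0].
  exists (S N0). intros n m Hn Hm. unfold Rdist.
  pose proof (Htail (S N0) n ltac:(lia) Hn) as Hn'.
  pose proof (Htail (S N0) m ltac:(lia) Hm) as Hm'.
  pose proof (Rabs_triang (u n - u (S N0)) (u (S N0) - u m)).
  replace (u n - u (S N0) + (u (S N0) - u m)) with (u n - u m) in * by ring.
  rewrite Rabs_minus_sym in Hm'.
  assert (2 * c / INR (S N0) < eps); [|lra].
  rewrite S_INR. assert (0 <= INR N0) by apply pos_INR.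
  apply (Rmult_gt_compat_r eps) in HN0; [|lra].
  replace (2 * c / eps * eps) with (2 * c) in HN0 by (field; lra).
  apply (Rmult_lt_reg_r (INR N0 + 1)); [lra|].
  replace (2 * c / (INR N0 + 1) * (INR N0 + 1)) with (2 * c) by (field; lra).
  nra.
Qed.

Lemma limit_bound u l c B : Un_cv u l ->
  (exists N, forall M, (M >= N)%nat -> Rabs (u M - c) <= B) -> Rabs (l - c) <= B.
Proof.
  intros Hu [N HN]. destruct (Rle_or_lt (Rabs (l - c)) B) as [H|H]; auto.
  exfalso. destruct (Hu (Rabs (l - c) - B)) as [N1 HN1]; [lra|].
  specialize (HN1 (Nat.max N N1) ltac:(lia)). specialize (HN (Nat.max N N1) ltac:(lia)).
  unfold Rdist in HN1. rewrite Rabs_minus_sym in HN1.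
  pose proof (Rabs_triang (l - u (Nat.max N N1)) (u (Nat.max N N1) - c)).
  replace (l - u (Nat.max N N1) + (u (Nat.max N N1) - c)) with (l - c) in * by ring.
  lra.
Qed.

Definition gauss_seq (x : R) (N : nat) : R := ln (INR N) - rsum N (fun k => / (x + INR k)).

Lemma Rdiv_le_cross a b c d : 0 < b -> 0 < d -> a * d <= c * b -> a / b <= c / d.
Proof.
  intros Hb Hd H. apply Rmult_le_reg_r with (b * d); [nra|].
  replace (a / b * (b * d)) with (a * d) by (field; lra).
  replace (c / d * (b * d)) with (c * b) by (field; lra). exact H.
Qed.

Lemma gauss_seq_step x N : 0 < x -> (1 <= N)%nat ->
  Rabs (gauss_seq x (S N) - gauss_seq x N) <= (2 * x + 1) * (1 / INR N - 1 / INR (S N)).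
Proof.
  intros Hx HN. unfold gauss_seq. simpl rsum. rewrite S_INR.
  assert (Hu : 1 <= INR N) by (apply (le_INR 1); auto).
  set (u := INR N) in *. destruct (ln_succ_bounds u ltac:(lra)) as [L1 L2].
  replace ((2 * x + 1) * (1 / u - 1 / (u + 1))) with ((2 * x + 1) / (u * (u + 1)))
    by (field; lra).
  replace (1 / (u + 1)) with (1 / u - 1 / (u * (u + 1))) in L1 by (field; lra).
  assert (Hlow : 1 / (u * (u + 1)) <= (2 * x + 1) / (u * (u + 1)))
    by (apply Rdiv_le_cross; nra).
  assert (Hinv : / (x + u) <= 1 / u)
    by (unfold Rdiv; rewrite Rmult_1_l; apply Rinv_le_contravar; lra).
  assert (Hup : 1 / u - / (x + u) <= (2 * x + 1) / (u * (u + 1))).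
  { replace (1 / u - / (x + u)) with (x / (u * (x + u))) by (field; lra).
    apply Rdiv_le_cross; nra. }
  apply Rabs_le. lra.
Qed.

Lemma Psi_rate x N : 0 < x -> (1 <= N)%nat -> Rabs (Psi x - gauss_seq x N) <= (2 * x + 1) / INR N.
Proof.
  intros Hx HN.
  assert (Htail := telescoping_tail (gauss_seq x) (2 * x + 1) ltac:(lra)
                     (fun N HN => gauss_seq_step x N Hx HN)).
  assert (Hcv : Un_cv (gauss_seq x) (Psi x)).
  { unfold Psi. apply epsilon_spec.
    destruct (R_complete (gauss_seq x) (cauchy_of_tail (gauss_seq x) (2 * x + 1) ltac:(lra) Htail)) as [l Hl].
    exists l. exact Hl. }
  apply (limit_bound (gauss_seq x)); auto. exists N. intros M HM. apply Htail; auto.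
Qed.

Lemma h_asym theta k : 0 < theta -> (1 <= k)%nat ->
  Rabs (h theta (S k) - ln (INR (S k)) + Psi (theta + 1)) <= (2 * theta + 4) / INR k.
Proof.
  intros Ht Hk.
  assert (Hh : h theta (S k) = ln (INR k) - gauss_seq (theta + 1) k).
  { unfold gauss_seq, h. replace (S k - 1)%nat with k by lia.
    rewrite (rsum_ext k (fun j => 1 / (theta + INR (S j))) (fun j => / (theta + 1 + INR j)))
      by (intros; rewrite S_INR; unfold Rdiv; rewrite Rmult_1_l; f_equal; ring).
    ring. }
  rewrite Hh, S_INR.
  assert (Hu : 1 <= INR k) by (apply (le_INR 1); auto).
  destruct (ln_succ_bounds (INR k) ltac:(lra)) as [L1 L2].
  pose proof (Psi_rate (theta + 1) k ltac:(lra) Hk).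
  pose proof (Rabs_triang (ln (INR k) - ln (INR k + 1)) (Psi (theta + 1) - gauss_seq (theta + 1) k)).
  replace (ln (INR k) - ln (INR k + 1) + (Psi (theta + 1) - gauss_seq (theta + 1) k))
    with (ln (INR k) - gauss_seq (theta + 1) k - ln (INR k + 1) + Psi (theta + 1)) in * by ring.
  assert (0 < 1 / (INR k + 1)) by (apply Rdiv_lt_0_compat; lra).
  rewrite (Rabs_left1 (ln (INR k) - ln (INR k + 1))) in * by lra.
  replace ((2 * theta + 4) / INR k) with (1 / INR k + (2 * (theta + 1) + 1) / INR k)
    by (field; lra).
  lra.
Qed.

Lemma T_asymptotics theta : 0 < theta ->
  exists C N0, forall n : nat, (N0 <= n)%nat ->
    Rabs (Ex theta (n - 1) (Tn n)
          - (INR n * ln (INR n) - Psi (theta + 1) * INR n + (theta - 1) * ln (INR n))) <= C.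
Proof.
  intros Ht. exists ((theta + 1) * (2 * theta + 4) + Rabs (1 - theta) * Rabs (Psi (theta + 1))), 2%nat.
  intros n Hn. destruct n as [|k]; [lia|]. replace (S k - 1)%nat with k by lia.
  rewrite expected_T by auto.
  pose proof (h_asym theta k Ht ltac:(lia)) as He.
  set (e := h theta (S k) - ln (INR (S k)) + Psi (theta + 1)) in *.
  replace (h theta (S k)) with (e + ln (INR (S k)) - Psi (theta + 1)) by (unfold e; ring).
  rewrite S_INR in *.
  replace ((theta + INR k) * (e + ln (INR k + 1) - Psi (theta + 1)) -
    ((INR k + 1) * ln (INR k + 1) - Psi (theta + 1) * (INR k + 1) + (theta - 1) * ln (INR k + 1)))
    with ((theta + INR k) * e + (1 - theta) * Psi (theta + 1)) by ring.
  assert (Hu : 1 <= INR k) by (apply (le_INR 1); lia).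
  pose proof (Rabs_triang ((theta + INR k) * e) ((1 - theta) * Psi (theta + 1))).
  rewrite !Rabs_mult, (Rabs_pos_eq (theta + INR k)) in * by lra.
  assert ((theta + INR k) * Rabs e <= (theta + 1) * (2 * theta + 4)); [|lra].
  apply (Rle_trans _ ((theta + INR k) * ((2 * theta + 4) / INR k))).
  - apply Rmult_le_compat_l; lra.
  - replace ((theta + INR k) * ((2 * theta + 4) / INR k))
      with ((2 * theta + 4) * (1 + theta / INR k)) by (field; lra).
    assert (theta / INR k <= theta).
    { unfold Rdiv. rewrite <- (Rmult_1_r theta) at 2. apply Rmult_le_compat_l; [lra|].
      rewrite <- Rinv_1. apply Rinv_le_contravar; lra. }
    nra.
Qed.

Lemma linear_growth_bound A B c t L Y N M k :
  1 <= N -> Rabs L <= N -> Rabs Y <= M -> 0 <= t <= k * N -> 0 <= k ->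
  Rabs (A + B * N + c * L + t * Y) <= (Rabs A + Rabs B + Rabs c + k * M) * N.
Proof.
  intros HN HL HY Ht Hk.
  assert (0 <= M) by (pose proof (Rabs_pos Y); lra).
  pose proof (Rabs_triang (A + B * N + c * L) (t * Y)).
  pose proof (Rabs_triang (A + B * N) (c * L)).
  pose proof (Rabs_triang A (B * N)).
  rewrite !Rabs_mult, (Rabs_pos_eq N), (Rabs_pos_eq t) in * by lra.
  pose proof (Rabs_pos A). pose proof (Rabs_pos c). pose proof (Rabs_pos Y).
  assert (Rabs A <= Rabs A * N) by nra.
  assert (Rabs c * Rabs L <= Rabs c * N) by nra.
  assert (t * Rabs Y <= k * N * M) by nra.
  nra.
Qed.

Lemma U_asymptotics theta : 0 < theta ->
  exists C N0, forall n : nat, (N0 <= n)%nat ->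
    Rabs (Ex theta (n - 1) (Un n) - (2 / (1 + theta) * INR n ^ 2 - INR n * ln (INR n)))
    <= C * INR n.
Proof.
  intros Ht.
  pose (A := 2 * (theta * theta - theta) / (1 + theta) - 2 * theta + 2).
  pose (B := 2 * (2 * theta - 1) / (1 + theta) - 2).
  exists (Rabs A + Rabs B + Rabs (1 - theta) + (theta + 1) * (Rabs (Psi (theta + 1)) + (2 * theta + 4))), 2%nat.
  intros n Hn. destruct n as [|[|k]]; try lia. replace (S (S k) - 1)%nat with (S k) by lia.
  rewrite expected_U by auto.
  replace (h theta (S k)) with (h theta (S (S k)) - 1 / (theta + INR (S k)))
    by (rewrite (h_S theta (S k)) by lia; ring).
  pose proof (h_asym theta (S k) Ht ltac:(lia)) as He.
  set (e := h theta (S (S k)) - ln (INR (S (S k))) + Psi (theta + 1)) in *.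
  replace (h theta (S (S k))) with (e + ln (INR (S (S k))) - Psi (theta + 1)) by (unfold e; ring).
  set (L := ln (INR (S (S k)))) in *.
  assert (Hu : 1 <= INR (S k)) by (apply (le_INR 1); lia).
  assert (HeB : Rabs e <= 2 * theta + 4).
  { apply (Rle_trans _ _ _ He). unfold Rdiv. rewrite <- (Rmult_1_r (2 * theta + 4)) at 2.
    apply Rmult_le_compat_l; [lra|]. rewrite <- Rinv_1. apply Rinv_le_contravar; lra. }
  assert (HL : Rabs L <= INR (S (S k))) by (apply ln_abs_le; rewrite S_INR; lra).
  rewrite (S_INR (S k)) in *. set (u := INR (S k)) in *.
  replace ((theta + (u + 1)) * (theta + (u + 1) - 1) *
     (2 / (1 + theta) - 1 / (theta + (u + 1) - 1) -
      1 / (theta + (u + 1)) * (1 + (e + L - Psi (theta + 1) - 1 / (theta + u)))) -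
     (2 / (1 + theta) * (u + 1) ^ 2 - (u + 1) * L))
    with (A + B * (u + 1) + (1 - theta) * L + (theta + u) * (Psi (theta + 1) - e))
    by (unfold A, B; field; lra).
  apply linear_growth_bound; try lra.
  - pose proof (Rabs_triang (Psi (theta + 1)) (- e)). rewrite Rabs_Ropp in *. unfold Rminus. lra.
  - nra.
Qed.

(* E W_n = n E T_n - E U_n, so the two previous expansions combine. *)
Lemma W_asymptotics theta : 0 < theta ->
  exists C N0, forall n : nat, (N0 <= n)%nat ->
    Rabs (Ex theta (n - 1) (Wn n)
          - (INR n ^ 2 * ln (INR n) - (Psi (theta + 1) + 2 / (theta + 1)) * INR n ^ 2
             + theta * INR n * ln (INR n))) <= C * INR n.
Proof.
  intros Ht.
  destruct (T_asymptotics theta Ht) as [CT [NT HT]].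
  destruct (U_asymptotics theta Ht) as [CU [NU HU]].
  exists (CT + CU), (Nat.max 1 (Nat.max NT NU)). intros n Hn.
  specialize (HT n ltac:(lia)). specialize (HU n ltac:(lia)).
  destruct n as [|m]; [lia|]. replace (S m - 1)%nat with m in * by lia.
  rewrite expected_W_decomp by auto.
  set (N := INR (S m)) in *.
  assert (HN : 1 <= N) by (unfold N; rewrite S_INR; pose proof (pos_INR m); lra).
  set (ET := Ex theta m (Tn (S m))) in *. set (EU := Ex theta m (Un (S m))) in *.
  set (L := ln N) in *. set (P := Psi (theta + 1)) in *.
  replace (N * ET - EU - (N ^ 2 * L - (P + 2 / (theta + 1)) * N ^ 2 + theta * N * L))
    with (N * (ET - (N * L - P * N + (theta - 1) * L))
          - (EU - (2 / (1 + theta) * N ^ 2 - N * L))) by (field; lra).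
  pose proof (Rabs_triang (N * (ET - (N * L - P * N + (theta - 1) * L)))
                          (- (EU - (2 / (1 + theta) * N ^ 2 - N * L)))).
  rewrite Rabs_Ropp, Rabs_mult, (Rabs_pos_eq N) in * by lra.
  unfold Rminus at 1. nra.
Qed.

Theorem mainTheorem5 (theta : R) (Htheta : 0 < theta) :
  (forall (n : nat) (J : nat -> nat), (2 <= n)%nat -> valid (n - 2) J ->
     condE theta n (Tn n) J
       = (theta + INR n - 1) / (theta + INR n - 2) * Tn (n - 1) J + 1
  /\ condE theta n (Rn n) J
       = (theta + INR n) / (theta + INR n - 2) * Rn (n - 1) J
         + 1 / (theta + INR n - 2) * Tn (n - 1) J
  /\ condE theta n (Un n) J
       = (theta + INR n) / (theta + INR n - 2) * Un (n - 1) J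
         + 1 / (theta + INR n - 2) * Tn (n - 1) J + 1
  /\ condE theta n (Wn n) J
       = (theta + INR n) / (theta + INR n - 2) * Wn (n - 1) J
         + (theta - 1) / (theta + INR n - 2) * Tn (n - 1) J + (INR n - 1))
  /\
  (forall n : nat, (1 <= n)%nat ->
     Ex theta (n - 1) (Tn n) = (theta + INR n - 1) * h theta n)
  /\
  (forall n : nat, (2 <= n)%nat ->
     Ex theta (n - 1) (Un n)
       = (theta + INR n) * (theta + INR n - 1) *
         (2 / (1 + theta) - 1 / (theta + INR n - 1)
          - 1 / (theta + INR n) * (1 + h theta (n - 1))))
  /\
  (forall n : nat, (2 <= n)%nat ->
     Ex theta (n - 1) (Wn n)
       = (theta + INR n) * (theta + INR n - 1) *
         ((theta - 1) * (1 / (theta + 1) - 1 / (theta + INR n - 1)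
                         - h theta (n - 1) / (theta + INR n))
          + h theta n - 1 + (theta + 1) / (theta + INR n)))
  /\
  (exists C N0, forall n : nat, (N0 <= n)%nat ->
     Rabs (Ex theta (n - 1) (Tn n)
           - (INR n * ln (INR n) - Psi (theta + 1) * INR n
              + (theta - 1) * ln (INR n))) <= C)
  /\
  (exists C N0, forall n : nat, (N0 <= n)%nat ->
     Rabs (Ex theta (n - 1) (Un n)
           - (2 / (1 + theta) * INR n ^ 2 - INR n * ln (INR n))) <= C * INR n)
  /\
  (exists C N0, forall n : nat, (N0 <= n)%nat ->
     Rabs (Ex theta (n - 1) (Wn n)
           - (INR n ^ 2 * ln (INR n)
              - (Psi (theta + 1) + 2 / (theta + 1)) * INR n ^ 2
              + theta * INR n * ln (INR n))) <= C * INR n).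
Proof.
  split; [|split; [|split; [|split]]].
  - intros n J Hn HV.
    repeat split; [apply condE_T | apply condE_R | apply condE_U | apply condE_W]; auto.
  - intros n Hn. destruct n as [|m]; [lia|]. replace (S m - 1)%nat with m by lia.
    rewrite expected_T, S_INR by auto. ring.
  - intros n Hn. destruct n as [|[|m]]; try lia. replace (S (S m) - 1)%nat with (S m) by lia.
    apply expected_U; auto.
  - intros n Hn. destruct n as [|[|m]]; try lia. replace (S (S m) - 1)%nat with (S m) by lia.
    apply expected_W; auto.
  - auto using T_asymptotics, U_asymptotics, W_asymptotics.
Qed.
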